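(* Let $G$ be a persistent graph with vertex order $<$ and let $p,q,r\in V(G)$ with $p<q<r$. If $\{p,q\}\in E(G)$ and $\{p,r\}\in E(G)$ but $\{q,r\}\notin E(G)$, then $p$ and $q$ have a common neighbor $b\in V(G)$ with $q<b<r$.
   Context: A persistent graph is a graph $G$ together with a linear order $v_1<v_2<\dots<v_n$ on $V(G)$ such that (1) $\{v_i,v_{i+1}\}\in E(G)$ for all $i$; (2) X-property: for all $p<q<r<s$, if $\{p,r\}\in E(G)$ and $\{q,s\}\in E(G)$ then $\{p,s\}\in E(G)$; (3) bar-property: if $\{p,q\}\in E(G)$ and $p,q$ are not consecutive in the order, then there is a vertex $r$ with $p<r<q$ adjacent to both $p$ and $q$. *)

From mathcomp Require Import all_boot.
Set Implicit Arguments. Unset Strict Implicit. Unset Printing Implicit Defensive.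

(* A simple graph on the vertex set 'I_n (vertices v_1 < ... < v_n are
   identified with 0 < 1 < ... < n-1 via the ordinal order). *)
Definition simple_graph (n : nat) (E : rel 'I_n) : Prop :=
  (forall x y, E x y = E y x) /\ (forall x, ~~ E x x).

Definition persistent (n : nat) (E : rel 'I_n) : Prop :=
  simple_graph E /\
  (forall i j : 'I_n, j = i.+1 :> nat -> E i j) /\
  (* (2) X-property *)
  (forall p q r s : 'I_n, p < q -> q < r -> r < s ->
      E p r -> E q s -> E p s) /\
  (* (3) bar-property *)
  (forall p q : 'I_n, p < q -> E p q -> q != p.+1 :> nat ->
      exists r : 'I_n, [/\ p < r, r < q, E p r & E r q]).

From mathcomp Require Import all_boot.
Set Implicit Arguments.
Unset Strict Implicit.
Unset Printing Implicit Defensive.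

(* Take the vertex s > q nearest to q with E p s and ~~ E q s (r is one).  A
   vertex y in [p, q) adjacent to s exists (y = p); for the largest such y, the
   bar-property applied to the edge {y, s} yields a common neighbour z of y and
   s with y < z < s.  Maximality of y and ~~ E q s force q < z, and then E p z
   follows from E p q, E y z by the X-property.  Minimality of s gives E q z. *)

Section PersistentGraph.

Variables (n : nat) (E : rel 'I_n).
Hypothesis persE : persistent E.

Lemma persistent_X_le (p y q z : 'I_n) :
  p <= y -> y < q -> q < z -> E p q -> E y z -> E p z.
Proof.
have [_ [_ [EX _]]] := persE.
by rewrite leq_eqVlt => /predU1P[/val_inj <- // | py]; apply: EX.
Qed.

Lemma persistent_neighbor_beyond (p q s : 'I_n) :
  p < q -> q < s -> E p q -> E p s -> ~~ E q s ->
  exists2 z : 'I_n, q < z < s & E p z.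
Proof.
move=> pq qs Epq Eps nEqs; have [_ [_ [_ Ebar]]] := persE.
have Pp : (p <= p < q) && E p s by rewrite leqnn pq.
case: (@arg_maxnP _ p [pred y : 'I_n | (p <= y < q) && E y s] val Pp).
move=> y /andP[/andP[py yq] Eys] ymax.
have [|z [yz zs Eyz Ezs]] := Ebar y s (ltn_trans yq qs) Eys.
  by rewrite neq_ltn (leq_ltn_trans yq qs) orbT.
case: (ltngtP z q) => [zq | qz | /val_inj zq].
- have : z <= y by apply: ymax; rewrite /= (leq_trans py (ltnW yz)) zq Ezs.
  by rewrite leqNgt yz.
- by exists z; [rewrite qz | apply: persistent_X_le Epq Eyz].
- by rewrite -zq Ezs in nEqs.
Qed.

End PersistentGraph.

Theorem lemma2 (n : nat) (E : rel 'I_n) (p q r : 'I_n) :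
  persistent E -> p < q -> q < r ->
  E p q -> E p r -> ~~ E q r ->
  exists b : 'I_n, [/\ q < b, b < r, E p b & E q b].
Proof.
move=> persE pq qr Epq Epr nEqr.
have Pr : [&& q < r, E p r & ~~ E q r] by rewrite qr Epr.
case: (@arg_minnP _ r [pred s : 'I_n | [&& q < s, E p s & ~~ E q s]] val Pr).
move=> s /and3P[qs Eps nEqs] smin.
have [b /andP[qb bs] Epb] := persistent_neighbor_beyond persE pq qs Epq Eps nEqs.
exists b; split => //.
  exact: leq_trans bs (smin r Pr).
apply: contraT => nEqb.
have : s <= b by apply: smin; rewrite /= qb Epb nEqb.
by rewrite leqNgt bs.
Qed.
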